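(* Let $p\in(0,1)$ and let $(\lambda_n)_{n\ge1}$ be a sequence with $\lambda_1=1$ and $0<\lambda_n\le\lambda_{n-1}$ for all $n>1$. Let $r_1,r_2,\dots$ be $\{0,1\}$-valued random variables with $\Pr(r_1=1)=p$ and, for every $n\ge2$, $\Pr(r_n=1\mid r_1,\dots,r_{n-1})=\lambda_n p+(1-\lambda_n)\bar p_{n-1}$, where $\bar p_m=\frac1m\sum_{i=1}^m r_i$. Define $\hat r_1=r_1$ and $\hat r_i=\frac{r_i-(1-\lambda_i)\bar p_{i-1}}{\lambda_i}$ for $i\ge2$. Then for all $i>j\ge1$, \[\mathbb{E}[\hat r_i\mid\hat r_j]=\mathbb{E}[\hat r_i\mid\bar p_j]=p.\] *)

From HB Require Import structures.
From mathcomp Require Import all_boot all_order all_algebra.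
From mathcomp Require Import all_classical all_reals all_analysis.
Set Implicit Arguments. Unset Strict Implicit. Unset Printing Implicit Defensive.
Import Order.TTheory GRing.Theory Num.Theory.
Local Open Scope classical_set_scope.
Local Open Scope ring_scope.

(* Random variables are indexed 1,2,3,...; index 0 is unused. *)

Definition pbar {T} {R : realType} (r : nat -> T -> R) (m : nat) (t : T) : R :=
  (\sum_(1 <= k < m.+1) r k t) / m%:R.

Definition rhat {T} {R : realType} (lam : nat -> R) (r : nat -> T -> R)
  (i : nat) (t : T) : R :=
  if i == 1%N then r 1%N t
  else (r i t - (1 - lam i) * pbar r i.-1 t) / lam i.

(* atom of sigma(r_1,...,r_{n-1}) : the event {r_k = w_k for 1 <= k < n} *)
Definition prefix_event {T} {R : realType} (r : nat -> T -> R) (n : nat)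
  (w : nat -> bool) : set T :=
  [set t | forall k, (1 <= k < n)%N -> r k t = (w k)%:R].

(* E[Y | X] = c  (a.s.), i.e. Y is integrable and the constant c satisfies the
   defining property of the conditional expectation w.r.t. sigma(X):
   for every Borel B, E[Y 1_{X in B}] = c P(X in B). *)
Definition cond_exp_eq {d} {T : measurableType d} {R : realType}
  (P : probability T R) (Y X : T -> R) (c : R) : Prop :=
  P.-integrable setT (EFin \o Y) /\
  forall B : set R, measurable B ->
    (\int[P]_(t in X @^-1` B) (Y t)%:E = c%:E * P (X @^-1` B))%E.

From HB Require Import structures.
From mathcomp Require Import all_boot all_order all_algebra.
From mathcomp Require Import all_classical all_reals all_analysis.
From mathcomp Require Import measurable_realfun.
Import Order.TTheory GRing.Theory Num.Theory.
Local Open Scope classical_set_scope.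
Local Open Scope ring_scope.

(* On an atom A = {r_1 = w_1, ..., r_{i-1} = w_{i-1}} of the sigma-algebra
   generated by r_1, ..., r_{i-1}, the running mean \bar p_{i-1} is a constant,
   so \hat r_i = (r_i - c) / lam_i on A with c = (1 - lam_i) \bar p_{i-1}(w),
   while the hypothesis reads E[r_i 1_A] = (lam_i p + c) P(A); hence
   E[\hat r_i 1_A] = p P(A).  Both \hat r_j and \bar p_j (j < i) are functions
   of r_1, ..., r_{i-1}, so every event {X \in B} they generate is a finite
   disjoint union of such atoms, and summing over the atoms gives
   E[\hat r_i 1_{X \in B}] = p P(X \in B). *)

Lemma integrable_bounded {d : measure_display} {T : measurableType d}
    {R : realType} (mu : {finite_measure set T -> \bar R}) (D : set T)
    (f : T -> R) (M : R) :
  measurable D -> measurable_fun D f -> (forall t, D t -> `|f t| <= M) ->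
  mu.-integrable D (EFin \o f).
Proof.
move=> mD mf fM; apply: measurable_bounded_integrable => //.
  by rewrite (le_lt_trans (le_measure _ _ _ (subsetT D))) ?inE ?fin_num_fun_lty.
exists M; split; first by rewrite num_real.
by move=> N MN t Dt; rewrite /= (le_trans (fM t Dt)) ?ltW.
Qed.

Lemma integral_01_valued {d : measure_display} {T : measurableType d}
    {R : realType} (mu : measure T R) (D : set T) (f : T -> R) :
  measurable D -> measurable_fun setT f -> (forall t, f t = 0 \/ f t = 1) ->
  (\int[mu]_(t in D) (f t)%:E = mu (D `&` [set t | f t = 1%R]))%E.
Proof.
move=> mD mf f01.
have mf1 : measurable [set t | f t = 1].
  by rewrite -[X in measurable X]setTI; exact: mf (measurable_set1 1).
rewrite setIC -integral_indic //; apply: eq_integral => t _.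
rewrite indicE; case: (f01 t) => ft; rewrite ft; last by rewrite mem_set.
by rewrite memNset //= ft => /eqP; rewrite eq_sym oner_eq0.
Qed.

Section BinarySequence.
Context {d : measure_display} {T : measurableType d} {R : realType}.
Variable r : nat -> T -> R.
Hypothesis mr : forall n, measurable_fun setT (r n).
Hypothesis r01 : forall n t, r n t = 0 \/ r n t = 1.

Definition prefix_determined {U : Type} (n : nat) (X : T -> U) : Prop :=
  forall t t', (forall k, (1 <= k < n)%N -> r k t = r k t') -> X t = X t'.

Lemma pbar_prefix_determined m n : (m < n)%N -> prefix_determined n (pbar r m).
Proof.
move=> mn t t' tt'; rewrite /pbar; congr (_ / _).
apply: eq_big_nat => k /andP[k1 km]; apply: tt'.
by rewrite k1 (leq_trans km).
Qed.

Lemma rhat_prefix_determined lam j n : (0 < j < n)%N ->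
  prefix_determined n (rhat lam r j).
Proof.
move=> /andP[j1 jn] t t' tt'; rewrite /rhat; case: ifP => _.
  by apply: tt'; rewrite (leq_ltn_trans j1 jn).
rewrite tt' ?j1 // (@pbar_prefix_determined j.-1 n _ t t') //.
exact: leq_ltn_trans (leq_pred j) jn.
Qed.

Lemma pbar_ge0 m t : 0 <= pbar r m t.
Proof.
by rewrite /pbar divr_ge0 // sumr_ge0 // => k _; case: (r01 k t) => ->.
Qed.

Lemma pbar_le1 m t : pbar r m t <= 1.
Proof.
case: m => [|m]; first by rewrite /pbar invr0 mulr0 ler01.
rewrite /pbar ler_pdivrMr ?ltr0Sn // mul1r.
apply: (le_trans (y := \sum_(1 <= k < m.+2) (1 : R))).
- by apply: ler_sum => k _; case: (r01 k t) => ->.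
- by rewrite sumr_const_nat subn1.
Qed.

Lemma measurable_pbar m : measurable_fun setT (pbar r m).
Proof.
exact: measurable_funM (measurable_sum _ (fun k => mr k)) (measurable_cst _).
Qed.

Lemma measurable_rhat lam i : measurable_fun setT (rhat lam r i).
Proof.
rewrite /rhat; case: (i == 1%N) => //.
apply: measurable_funM (measurable_funB _ _) (measurable_cst _) => //.
exact: measurable_funM (measurable_cst _) (measurable_pbar _).
Qed.

Lemma measurable_prefix_event n w : measurable (prefix_event r n w).
Proof.
have -> : prefix_event r n w =
    \bigcap_k (if (1 <= k < n)%N then r k @^-1` [set (w k)%:R] else setT).
  apply/seteqP; split => [t tw k _|t tw k kn]; first by case: ifP => // /tw.
  by have := tw k I; rewrite kn.
apply: bigcapT_measurable => k; case: ifP => // _.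
by rewrite -[X in measurable X]setTI; exact: mr (measurable_set1 _).
Qed.

Lemma pbar_prefix_event {m w t} : prefix_event r m.+1 w t ->
  pbar r m t = (\sum_(1 <= k < m.+1) (w k)%:R) / m%:R.
Proof. by move=> tw; congr (_ / _); apply: eq_big_nat => k /tw. Qed.

(* Tuples are indexed from 0 and the sequence from 1, hence the shift [k.-1]. *)
Definition prefix_atom n (w : n.-tuple bool) : set T :=
  prefix_event r n.+1 (fun k => nth false w k.-1).

Lemma measurable_prefix_atom n w : measurable (prefix_atom n w).
Proof. exact: measurable_prefix_event. Qed.

Lemma prefix_atoms_trivIset n : trivIset setT (@prefix_atom n).
Proof.
move=> w1 w2 _ _ [t [tw1 tw2]]; apply: eq_from_tnth => k.
rewrite !(tnth_nth false).
have kn : (0 < k.+1 < n.+1)%N by rewrite /= ltnS.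
by move: (etrans (esym (tw1 _ kn)) (tw2 _ kn)) => /= /eqP; rewrite eqr_nat;
  case: nth; case: nth.
Qed.

Lemma prefix_atoms_cover n :
  \big[setU/set0]_(w <- enum {: n.-tuple bool}) prefix_atom n w = setT.
Proof.
rewrite -bigcup_seq; apply/seteqP; split => // t _.
exists [tuple r k.+1 t == 1 | k < n]; first by rewrite /= mem_enum.
move=> k /andP[k_gt0 kn]; have k'n : (k.-1 < n)%N by rewrite -ltnS prednK.
rewrite (nth_mktuple _ _ (Ordinal k'n)) /= prednK //.
by case: (r01 k t) => ->; rewrite ?eqxx // eq_sym oner_eq0.
Qed.

Lemma integral_prefix_atoms (mu : measure T R) n D (f : T -> R) :
  measurable D -> measurable_fun D f ->
  (\int[mu]_(t in D) (f t)%:E = \sum_(w <- enum {: n.-tuple bool})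
     \int[mu]_(t in D `&` prefix_atom n w) (f t)%:E)%E.
Proof.
move=> mD mf.
have eD : D = \big[setU/set0]_(w <- enum {: n.-tuple bool})
                (D `&` prefix_atom n w).
  by rewrite -bigcup_seq -setI_bigcupr bigcup_seq prefix_atoms_cover setIT.
rewrite {1}eD integral_bigsetU_EFin ?enum_uniq -?eD //.
- by move=> w; apply: measurableI => //; exact: measurable_prefix_atom.
- exact/trivIset_setIl/(sub_trivIset _ (prefix_atoms_trivIset n)).
- exact/measurable_EFinP.
Qed.

Lemma preimage_prefix_determined_atom {U : Type} n (X : T -> U) B w :
  prefix_determined n.+1 X ->
  X @^-1` B `&` prefix_atom n w = set0 \/
  X @^-1` B `&` prefix_atom n w = prefix_atom n w.
Proof.
move=> Xdet.
have [|/set0P[t0 [Bt0 wt0]]] := eqVneq (X @^-1` B `&` prefix_atom n w) set0.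
  by left.
right; apply/seteqP; split => [t []//|t wt]; split => //.
by rewrite /preimage /= (Xdet t t0) // => k kn; rewrite wt ?wt0.
Qed.

Section RescaledStep.
Variables (P : probability T R) (p : R) (lam : nat -> R) (n : nat).
Hypothesis n_gt0 : (0 < n)%N.
Hypothesis lam_gt0 : 0 < lam n.+1.
Hypothesis r_step : forall w : nat -> bool,
  P (prefix_event r n.+1 w `&` [set t | r n.+1 t = 1]) =
  ((lam n.+1 * p +
    (1 - lam n.+1) * ((\sum_(1 <= k < n.+1) (w k)%:R) / n%:R))%:E
   * P (prefix_event r n.+1 w))%E.

Lemma rhat_step t : rhat lam r n.+1 t =
  (lam n.+1)^-1 * (r n.+1 t - (1 - lam n.+1) * pbar r n t).
Proof. by rewrite /rhat eqSS gtn_eqF // mulrC. Qed.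

Lemma integrable_rhat : P.-integrable setT (EFin \o rhat lam r n.+1).
Proof.
apply: (integrable_bounded _ _ _ ((lam n.+1)^-1 * (1 + `|1 - lam n.+1|))) => //.
  exact: measurable_rhat.
move=> t _; rewrite rhat_step normrM ger0_norm ?invr_ge0 ?(ltW lam_gt0) //.
rewrite ler_pM2l ?invr_gt0 // (le_trans (ler_normB _ _)) // lerD //.
  by case: (r01 n.+1 t) => ->; rewrite ?normr0 ?normr1.
by rewrite normrM [`|pbar _ _ _|]ger0_norm ?pbar_ge0 // ler_piMr ?pbar_le1.
Qed.

Lemma integral_rhat_prefix_event w :
  (\int[P]_(t in prefix_event r n.+1 w) (rhat lam r n.+1 t)%:E =
   p%:E * P (prefix_event r n.+1 w))%E.
Proof.
set A := prefix_event r n.+1 w.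
have mA : measurable A by exact: measurable_prefix_event.
set c := (1 - lam n.+1) * ((\sum_(1 <= k < n.+1) (w k)%:R) / n%:R).
have rhatA : {in A, forall t, (rhat lam r n.+1 t)%:E =
    ((lam n.+1)^-1)%:E * ((r n.+1 t)%:E - (cst c t)%:E)}%E.
  by move=> t /set_mem At; rewrite rhat_step (pbar_prefix_event At).
have irA : P.-integrable A (EFin \o r n.+1).
  apply: (integrable_bounded _ _ _ 1) => //.
    exact: measurable_funS (mr _).
  by move=> t _; case: (r01 n.+1 t) => ->; rewrite ?normr0 ?normr1.
have icA : P.-integrable A (EFin \o cst c).
  exact: finite_measure_integrable_cst.
rewrite (eq_integral _ _ rhatA) integralZl ?integralB_EFin //.
  2: exact: integrableB.
rewrite integral_01_valued // (integral_cst P mA c%:E).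
transitivity
  (((lam n.+1)^-1)%:E * ((lam n.+1 * p + c)%:E * P A - c%:E * P A))%E.
  by congr (_ * (_ - _))%E; exact: r_step.
have fA : P A \is a fin_num by exact: fin_num_measure.
rewrite -(fineK fA) -!EFinM; congr EFin.
by rewrite -mulrBl addrK -mulrA mulKf ?gt_eqF.
Qed.

Lemma cond_exp_eq_rhat (X : T -> R) :
  measurable_fun setT X -> prefix_determined n.+1 X ->
  cond_exp_eq P (rhat lam r n.+1) X p.
Proof.
move=> mX Xdet; split; first exact: integrable_rhat.
move=> B mB; have mXB : measurable (X @^-1` B).
  by rewrite -[X in measurable X]setTI; exact: mX.
transitivity (\int[P]_(t in X @^-1` B) p%:E)%E; last exact: integral_cst.
rewrite !(integral_prefix_atoms _ n) //.
  2: exact: measurable_funS (measurable_rhat _ _).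
apply: eq_bigr => w _.
case: (preimage_prefix_determined_atom _ _ B w Xdet) => ->.
  by rewrite !integral_set0.
transitivity (p%:E * P (prefix_atom n w))%E.
  exact: integral_rhat_prefix_event.
exact/esym/integral_cst/measurable_prefix_atom.
Qed.

End RescaledStep.

End BinarySequence.

Theorem theoremA10 (d : measure_display) (T : measurableType d) (R : realType)
  (P : probability T R) (p : R) (lam : nat -> R) (r : nat -> T -> R) :
  0 < p < 1 ->
  lam 1%N = 1 ->
  (forall n, (1 < n)%N -> 0 < lam n <= lam n.-1) ->
  (forall n, measurable_fun setT (r n)) ->
  (forall n t, r n t = 0 \/ r n t = 1) ->
  P [set t | r 1%N t = 1] = p%:E ->
  (forall n (w : nat -> bool), (2 <= n)%N ->
     P (prefix_event r n w `&` [set t | r n t = 1]) =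
     ((lam n * p + (1 - lam n) *
        ((\sum_(1 <= k < n) ((w k)%:R : R)) / n.-1%:R))%:E
      * P (prefix_event r n w))%E) ->
  forall i j, (1 <= j)%N -> (j < i)%N ->
    cond_exp_eq P (rhat lam r i) (rhat lam r j) p /\
    cond_exp_eq P (rhat lam r i) (pbar r j) p.
Proof.
(* Only the conditional law of r_i for i >= 2 matters: the law of r_1 and
   the values of p and lam 1 are never used. *)
move=> _ _ lam_bounds mr r01 _ r_step [//|n] j j_gt0 jn.
have n_gt0 : (0 < n)%N := leq_trans j_gt0 jn.
have /andP[lam_gt0 _] := lam_bounds n.+1 n_gt0.
have r_step_n := fun w => r_step n.+1 w n_gt0.
split; apply: cond_exp_eq_rhat => //.
- exact: measurable_rhat.
- by apply: rhat_prefix_determined; rewrite j_gt0.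
- exact: measurable_pbar.
- exact: pbar_prefix_determined.
Qed.
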